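(* Let $q$ be a positive integer and suppose that for each divisor $d$ of $q$ we are given a function $a_d:\mathbb Z\to\mathbb C$ of period $d$ with $|a_d(n)|\le1$ for all $n$, such that $a_{d_1d_2}(n)=a_{d_1}(n)a_{d_2}(n)$ whenever $d_1d_2\mid q$ and $\gcd(d_1,d_2)=1$. If $I$ is an interval of length $N$, then $$\frac1N\Big|\sum_{n\in I}a_q(n)\Big|\ll\Big(1+\frac{q\log q}{N}\Big)\prod_{p^e\| q}\ \max_{b\bmod p^e}\Big|\frac1{p^e}\sum_{r\bmod p^e}a_{p^e}(r)\,e\Big(\frac{br}{p^e}\Big)\Big|.$$
   Context: $e(x)=e^{2\pi i x}$; the sum over $I$ is over integers; the implied constant is absolute. *)

From HB Require Import structures.
From mathcomp Require Import all_boot all_order all_algebra.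
From mathcomp Require Export reals exp trigo.
From mathcomp Require Export complex.

Set Implicit Arguments.
Unset Strict Implicit.
Unset Printing Implicit Defensive.

Import Order.TTheory GRing.Theory Num.Theory.
Local Open Scope ring_scope.

Definition eC {R : realType} (x : R) : R[i] :=
  (Complex (cos (2 * pi * x)) (sin (2 * pi * x)))%C.

Definition cmod {R : realType} (z : R[i]) : R := ComplexField.Normc.normc z.

(* Expand a_q in the additive characters modulo q:
   a_q(n) = sum_b c_q(b) e(-bn/q) with c_q(b) = q^-1 sum_r a_q(r) e(br/q).
   For coprime m and n, c_mn(b) for a_mn = a_m a_n is the sum of c_m(c) c_n(c') over the
   pairs with b = cn + c'm (mod mn), and by the Chinese remainder theorem there is at most
   one such pair; hence |c_q(b)| is at most the product P over p^e || q of the largest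
   coefficient of a_{p^e}. Summing over an interval of length N, the frequency b = 0
   contributes at most N P, and each b <> 0 contributes P times a geometric sum of size at
   most q (1/b + 1/(q - b)), since |1 - e(b/q)| >= 2 min(b, q - b) / q. The harmonic sums
   add up to at most 6 q log q. *)
From HB Require Import structures.
From mathcomp Require Import all_boot all_order all_algebra.
From mathcomp Require Import reals exp trigo complex.
From mathcomp Require Import ring lra zify.
Import Order.TTheory GRing.Theory Num.Theory.
Local Open Scope ring_scope.

Lemma periodicz {U V : zmodType} {f : U -> V} {T : U} :
  periodic f T -> forall (z : int) (x : U), f (x + T *~ z) = f x.
Proof.
move=> fT [] n x; first exact: periodicn.
by rewrite NegzE mulrNz -(periodicn fT n.+1 (x - T *+ n.+1)) subrK.
Qed.

Lemma eqz_mod_small (d x y : int) :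
  0 <= x < d -> 0 <= y < d -> (d %| x - y)%Z -> x = y.
Proof. by move=> hx hy; rewrite -eqz_mod_dvd => /eqP; rewrite !modz_small. Qed.

Lemma crt_coords_unique (m n : nat) (c1 c2 d1 d2 : int) :
  coprime m n -> 0 <= c1 < m -> 0 <= c2 < m -> 0 <= d1 < n -> 0 <= d2 < n ->
  ((m * n)%N %| (c1 * n + d1 * m) - (c2 * n + d2 * m))%Z -> c1 = c2 /\ d1 = d2.
Proof.
move=> mn_coprime hc1 hc2 hd1 hd2; rewrite PoszM.
have -> : c1 * n + d1 * m - (c2 * n + d2 * m) = (c1 - c2) * n + (d1 - d2) * m by ring.
move=> hmn; split; [apply: (@eqz_mod_small m) | apply: (@eqz_mod_small n)] => //.
- rewrite -(@Gauss_dvdzl _ _ n); last by rewrite coprimezE.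
  rewrite -(rpredDr _ (dvdz_mull (d1 - d2) (dvdzz m))).
  exact: dvdz_trans (dvdz_mulr _ (dvdzz _)) hmn.
- rewrite -(@Gauss_dvdzl _ _ m); last by rewrite coprimezE coprime_sym.
  rewrite -(rpredDl _ (dvdz_mull (c1 - c2) (dvdzz n))).
  exact: dvdz_trans (dvdz_mull _ (dvdzz _)) hmn.
Qed.

Section AdditiveCharacter.
Context {R : realType}.
Implicit Types (x y : R) (z w : R[i]).

Lemma eC_periodic : periodic (@eC R) 1.
Proof. by move=> x; rewrite /eC mulrDr mulr1 !mulr_natl cosD2pi sinD2pi. Qed.

Lemma eCD x y : eC (x + y) = eC x * eC y.
Proof.
rewrite /eC mulrDr cosD sinD.
by apply/eqP; rewrite eq_complex /=; apply/andP; split; apply/eqP; ring.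
Qed.

Lemma eC0 : eC (0 : R) = 1.
Proof. by rewrite /eC mulr0 cos0 sin0. Qed.

Lemma cmod_eC x : cmod (eC x) = 1.
Proof. by rewrite /cmod /eC /= cos2Dsin2 sqrtr1. Qed.

Lemma cmod_ge0 z : 0 <= cmod z.
Proof. by case: z => u v; rewrite /cmod /= sqrtr_ge0. Qed.

Lemma cmodM z w : cmod (z * w) = cmod z * cmod w.
Proof. exact: ComplexField.Normc.normcM. Qed.

Lemma cmodD z w : cmod (z + w) <= cmod z + cmod w.
Proof. exact: le_normcD. Qed.

Lemma cmodN z : cmod (- z) = cmod z.
Proof. exact: normcN. Qed.

Lemma cmod0 : cmod (0 : R[i]) = 0.
Proof. exact: ComplexField.Normc.normc0. Qed.

Lemma cmod1 : cmod (1 : R[i]) = 1.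
Proof. exact: ComplexField.Normc.normc1. Qed.

Lemma cmodX z n : cmod (z ^+ n) = cmod z ^+ n.
Proof. by elim: n => [|n IH]; rewrite ?expr0 ?cmod1 // !exprS cmodM IH. Qed.

Lemma cmod_nat n : cmod (n%:R : R[i]) = n%:R.
Proof. by rewrite /cmod -[n%:R]/(1 *+ n) normcMn ComplexField.Normc.normc1. Qed.

Lemma cmod_sum (I : Type) (s : seq I) (P : pred I) (F : I -> R[i]) :
  cmod (\sum_(i <- s | P i) F i) <= \sum_(i <- s | P i) cmod (F i).
Proof.
elim/big_rec2: _ => [|i y z _ Hz]; first by rewrite cmod0.
by apply: le_trans (cmodD _ _) _; rewrite lerD2l.
Qed.

Lemma Re_le_cmod z : complex.Re z <= cmod z.
Proof.
case: z => u v; rewrite /cmod /=; apply: le_trans (ler_norm u) _.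
by rewrite -sqrtr_sqr ler_sqrt ?lerDl ?addr_ge0 ?sqr_ge0.
Qed.

Lemma cmod_1subX_le z n : cmod z = 1 -> cmod (1 - z ^+ n) <= n%:R * cmod (1 - z).
Proof.
move=> z1; elim: n => [|n IH]; first by rewrite expr0 subrr cmod0 mul0r.
have -> : 1 - z ^+ n.+1 = (1 - z ^+ n) + z ^+ n * (1 - z) by rewrite exprSr; ring.
apply: le_trans (cmodD _ _) _.
by rewrite cmodM cmodX z1 expr1n mul1r -nat1r mulrDl mul1r addrC lerD2l.
Qed.

Lemma cmod_geometric_le z n : cmod z = 1 -> cmod (1 - z) * cmod (\sum_(k < n) z ^+ k) <= 2.
Proof.
move=> z1; rewrite -cmodM -opprB mulNr -subrX1 cmodN.
by apply: le_trans (cmodD _ _) _; rewrite cmodN cmod1 cmodX z1 expr1n.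
Qed.

Definition efrac (q : nat) (k : int) : R[i] := eC (k%:~R / q%:R).

Lemma eC_efrac (q b r : nat) : eC (b%:R * r%:R / q%:R) = efrac q (b%:Z * r%:Z).
Proof. by rewrite /efrac -PoszM -natrM. Qed.

Lemma efracD q k1 k2 : efrac q (k1 + k2) = efrac q k1 * efrac q k2.
Proof. by rewrite /efrac -eCD intrD mulrDl. Qed.

Lemma efrac0 q : efrac q 0 = 1.
Proof. by rewrite /efrac mul0r eC0. Qed.

Lemma cmod_efrac q k : cmod (efrac q k) = 1.
Proof. exact: cmod_eC. Qed.

Lemma efrac_congr (q : nat) k1 k2 :
  (0 < q)%N -> (q %| k1 - k2)%Z -> efrac q k1 = efrac q k2.
Proof.
move=> q_gt0 /dvdzP [z hz]; rewrite -[k1](subrK k2) hz addrC /efrac intrD mulrDl.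
by rewrite intrM mulfK ?pnatr_eq0 -?lt0n // (periodicz eC_periodic).
Qed.

Lemma efracMn q k n : efrac q (k * n%:Z) = efrac q k ^+ n.
Proof.
elim: n => [|n IH]; first by rewrite mulr0 efrac0 expr0.
by rewrite -addn1 PoszD mulrDr efracD IH mulr1 exprD expr1.
Qed.

Lemma efrac_scale (m n : nat) k : (0 < n)%N -> efrac m k = efrac (m * n) (k * n%:Z).
Proof.
move=> n_gt0; rewrite /efrac natrM intrM -[n%:Z%:~R]/(n%:R : R) invfM mulrACA.
by rewrite mulfV ?pnatr_eq0 -?lt0n // mulr1.
Qed.

End AdditiveCharacter.

Section Orthogonality.
Context {R : realType}.

Lemma cmod_1_sub_efracN q m : cmod (1 - @efrac R q (- m)) = cmod (1 - efrac q m).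
Proof.
have -> : 1 - @efrac R q (- m) = - efrac q (- m) * (1 - efrac q m).
  by rewrite mulrBr mulr1 mulNr -efracD addNr efrac0 opprK addrC.
by rewrite cmodM cmodN cmod_efrac mul1r.
Qed.

Lemma cmod_1_sub_efrac_ge1 (q m : nat) :
  (0 < q)%N -> (q <= 4 * m <= 2 * q)%N -> 1 <= cmod (1 - @efrac R q m).
Proof.
move=> q_gt0 /andP[lo hi]; apply: le_trans _ (Re_le_cmod _).
rewrite /= lerDl oppr_ge0 /=.
set y : R := m%:~R / q%:R.
have q_pos : (0 : R) < q%:R by rewrite ltr0n.
have hy : (4 * m)%N%:R = 4 * y * q%:R.
  by rewrite /y natrM -!mulrA mulVf ?gt_eqF ?mulr1.
have /andP[y_lo y_hi] : 1/4 <= y <= 1/2.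
  move: lo hi; rewrite -!(ler_nat R) hy natrM => ??.
  apply/andP; split; nra.
have -> : 2 * pi * y = (2 * pi * y - pi / 2) + pi / 2 by rewrite subrK.
have pi_pos := pi_gt0 R.
by rewrite cosDpihalf oppr_le0; apply: sin_ge0_pi; apply/andP; split; nra.
Qed.

Lemma cmod_1_sub_efrac_lb (q s : nat) : (0 < s)%N -> (2 * s <= q)%N ->
  (2 * s)%:R <= q%:R * cmod (1 - @efrac R q s).
Proof.
move=> s_gt0 sq.
(* Pick k with ks/q in [1/4, 1/2]: then Re e(ks/q) <= 0, so 1 <= |1 - w^k| <= k |1 - w|
   for w = e(s/q). *)
have [k k_ge1 /andP[sk_le sk_ge]] : exists2 k, (1 <= k)%N & (2 * s * k <= q <= 4 * s * k)%N.
  have := divn_eq q (2 * s); have : (q %% (2 * s) < 2 * s)%N by rewrite ltn_pmod ?muln_gt0.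
  move: (q %/ (2 * s))%N (q %% (2 * s))%N => [|k] r r_lt q_eq; first lia.
  by exists k.+1 => //; apply/andP; split; nia.
have ge1 : 1 <= k%:R * cmod (1 - @efrac R q s).
  apply: le_trans _ (cmod_1subX_le _ k (cmod_efrac q s)).
  rewrite -efracMn -PoszM; apply: cmod_1_sub_efrac_ge1; lia.
have c_ge0 := cmod_ge0 (1 - @efrac R q s).
move: sk_le; rewrite -(ler_nat R) !natrM => sk_le.
have s_ge0 : (0 : R) <= s%:R by [].
nra.
Qed.

Lemma cmod_1_sub_efrac_min (q j : nat) : (0 < j < q)%N ->
  (2 * minn j (q - j))%:R <= q%:R * cmod (1 - @efrac R q j).
Proof.
move=> /andP[j_gt0 jq].
have [jle|jgt] := leqP j (q - j).
  by apply: cmod_1_sub_efrac_lb; lia.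
have -> : @efrac R q j = efrac q (- (q - j)%N%:Z).
  by apply: efrac_congr; [lia | rewrite opprK -PoszD subnKC ?dvdzz // ltnW].
rewrite cmod_1_sub_efracN.
apply: cmod_1_sub_efrac_lb; lia.
Qed.

Lemma efrac_neq1 (q : nat) (m : int) : (0 < q)%N -> ~~ (q %| m)%Z -> @efrac R q m != 1.
Proof.
move=> q_gt0 ndvd.
have q_neq0 : q%:Z != 0 by rewrite eqz_nat -lt0n.
pose j := `|(m %% q)%Z|%N.
have hj : (m %% q)%Z = j by rewrite gez0_abs ?modz_ge0.
have j_gt0 : (0 < j)%N.
  by rewrite lt0n -eqz_nat -hj; apply: contra ndvd => /eqP/dvdz_mod0P.
have jq : (j < q)%N by rewrite -ltz_nat -hj ltz_pmod ?ltz_nat.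
have -> : @efrac R q m = efrac q j.
  by apply: efrac_congr; rewrite // -eqz_mod_dvd -hj modz_mod.
apply/eqP => e1; have := @cmod_1_sub_efrac_min q j.
by rewrite j_gt0 jq e1 subrr cmod0 mulr0 lern0 => /(_ isT) /eqP; lia.
Qed.

Lemma sum_efrac (q : nat) (m : int) : (0 < q)%N ->
  \sum_(b < q) @efrac R q (b%:Z * m) = if (q %| m)%Z then q%:R else 0.
Proof.
move=> q_gt0; under eq_bigr => b _ do rewrite mulrC efracMn.
case: ifP => [qm | /negbT/(efrac_neq1 _ _ q_gt0) ne1].
  rewrite (@efrac_congr R q m 0) ?subr0 // efrac0.
  by under eq_bigr => b _ do rewrite expr1n; rewrite sumr_const card_ord.
have wq : @efrac R q m ^+ q = 1.
  by rewrite -efracMn (@efrac_congr R q _ 0) ?efrac0 // subr0 dvdz_mull.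
apply/eqP; have := subrX1 (@efrac R q m) q; rewrite wq subrr => /esym/eqP.
by rewrite mulf_eq0 subr_eq0 (negbTE ne1).
Qed.

End Orthogonality.

Section FourierCoefficients.
Context {R : realType}.
Implicit Types f : int -> R[i].

Definition fcoef (q : nat) f (b : nat) : R[i] :=
  q%:R^-1 * \sum_(r < q) f r%:Z * eC (b%:R * r%:R / q%:R).

Definition fcoef_max (q : nat) f : R := \big[Num.max/0]_(b < q) cmod (fcoef q f b).

Lemma fcoef_max_ge0 q f : 0 <= fcoef_max q f.
Proof. exact: bigmax_ge_id. Qed.

Lemma le_fcoef_max q f (b : 'I_q) : cmod (fcoef q f b) <= fcoef_max q f.
Proof. exact: le_bigmax. Qed.

Lemma fcoef_max_le q f (B : R) :
  0 <= B -> (forall b : nat, cmod (fcoef q f b) <= B) -> fcoef_max q f <= B.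
Proof. by move=> B_ge0 hB; apply: bigmax_le. Qed.

Lemma sum_ord_dvdz_sub {V : zmodType} (q : nat) (F : int -> V) (n : int) :
  (0 < q)%N -> periodic F q%:Z ->
  \sum_(r < q) (if (q %| r%:Z - n)%Z then F r%:Z else 0) = F n.
Proof.
move=> q_gt0 Fq.
have q_neq0 : q%:Z != 0 by rewrite eqz_nat -lt0n.
have nq_bounds : 0 <= (n %% q)%Z < q by rewrite modz_ge0 // ltz_pmod ?ltz_nat.
pose j := `|(n %% q)%Z|%N.
have hj : (n %% q)%Z = j by rewrite gez0_abs ?modz_ge0.
have jq : (j < q)%N by rewrite -ltz_nat -hj; case/andP: nq_bounds.
rewrite (bigD1 (Ordinal jq)) //= big1 ?addr0 => [|r r_neq_j].
  rewrite -hj -eqz_mod_dvd modz_mod eqxx.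
  by rewrite {2}(divz_eq n q) addrC mulrC -mulrzz (periodicz Fq).
case: ifP => // rn; case/eqP: r_neq_j; apply/val_inj/eqP => /=.
rewrite -eqz_nat -hj; apply/eqP/(@eqz_mod_small q) => //; first by rewrite ltz_nat ltn_ord.
by rewrite -eqz_mod_dvd modz_mod eqz_mod_dvd.
Qed.

Lemma fourier_inversion q f n : (0 < q)%N -> periodic f q%:Z ->
  f n = \sum_(b < q) fcoef q f b * efrac q (- (b%:Z * n)).
Proof.
move=> q_gt0 fq.
have q_neq0 : (q%:R : R[i]) != 0 by rewrite pnatr_eq0 -lt0n.
transitivity (\sum_(r < q) \sum_(b < q) q%:R^-1 * f r%:Z * efrac q (b%:Z * (r%:Z - n))).
  rewrite -(sum_ord_dvdz_sub q f n q_gt0 fq); apply: eq_bigr => r _.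
  rewrite -mulr_sumr sum_efrac //.
  by case: ifP => _; rewrite ?mulr0 // mulrAC mulVf ?mul1r.
rewrite exchange_big; apply: eq_bigr => b _ /=; rewrite /fcoef -mulrA mulr_suml mulr_sumr.
apply: eq_bigr => r _; rewrite eC_efrac -!mulrA -efracD.
by congr (_ * (_ * efrac q _)); ring.
Qed.

Lemma sum_interval_fourier q f (M : int) (N : nat) : (0 < q)%N -> periodic f q%:Z ->
  \sum_(k < N) f (M + k%:Z) = \sum_(b < q) fcoef q f b * efrac q (- (b%:Z * M)) *
                               \sum_(k < N) efrac q (- b%:Z) ^+ k.
Proof.
move=> q_gt0 fq.
under eq_bigr => k _ do rewrite (fourier_inversion q f _ q_gt0 fq).
rewrite exchange_big; apply: eq_bigr => b _ /=; rewrite mulr_sumr; apply: eq_bigr => k _.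
by rewrite -mulrA -efracMn -efracD; congr (_ * efrac q _); ring.
Qed.

End FourierCoefficients.

Section CoprimeModuli.
Context {R : realType}.
Variables (m n : nat) (g h f : int -> R[i]).
Hypotheses (m_gt0 : (0 < m)%N) (n_gt0 : (0 < n)%N) (mn_coprime : coprime m n).
Hypotheses (g_periodic : periodic g m%:Z) (h_periodic : periodic h n%:Z).
Hypothesis f_mul : forall r, f r = g r * h r.

Definition crt_hit (b : nat) (c c' : nat) : bool :=
  ((m * n)%N %| b%:Z - (c%:Z * n%:Z + c'%:Z * m%:Z))%Z.

Lemma fcoef_coprime_mul (b : nat) :
  fcoef (m * n) f b =
  \sum_(c < m) \sum_(c' < n) fcoef m g c * fcoef n h c' * (crt_hit b c c')%:R.
Proof.
have mn_gt0 : (0 < m * n)%N by rewrite muln_gt0 m_gt0.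
have expand (r : 'I_(m * n)) : f r%:Z * eC (b%:R * r%:R / (m * n)%:R) =
    \sum_(c < m) \sum_(c' < n) fcoef m g c * fcoef n h c' *
      efrac (m * n) (r%:Z * (b%:Z - (c%:Z * n%:Z + c'%:Z * m%:Z))).
  rewrite eC_efrac f_mul (fourier_inversion m g r m_gt0 g_periodic).
  rewrite (fourier_inversion n h r n_gt0 h_periodic) !mulr_suml.
  apply: eq_bigr => c _; rewrite mulr_sumr mulr_suml; apply: eq_bigr => c' _.
  rewrite (efrac_scale m n _ n_gt0) (efrac_scale n m _ m_gt0) [(n * m)%N]mulnC.
  have -> : @efrac R (m * n) (r%:Z * (b%:Z - (c%:Z * n%:Z + c'%:Z * m%:Z))) =
      efrac (m * n) (- (c%:Z * r%:Z) * n%:Z) * efrac (m * n) (- (c'%:Z * r%:Z) * m%:Z) *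
      efrac (m * n) (b%:Z * r%:Z).
    by rewrite -!efracD; congr efrac; ring.
  ring.
rewrite /fcoef (eq_bigr _ (fun r _ => expand r)) exchange_big mulr_sumr.
apply: eq_bigr => c _; rewrite exchange_big mulr_sumr; apply: eq_bigr => c' _ /=.
rewrite -mulr_sumr sum_efrac // /crt_hit mulrCA.
by case: ifP => _; rewrite ?mulr0 // mulVf ?mulr1 // pnatr_eq0 -lt0n.
Qed.

Lemma sum_crt_hit_le1 (b : nat) :
  \sum_(c < m) \sum_(c' < n) ((crt_hit b c c')%:R : R) <= 1.
Proof.
rewrite pair_bigA /=.
case: (pickP (fun p : 'I_m * 'I_n => crt_hit b p.1 p.2)) => [p0 hit0 | no_hit]; last first.
  by rewrite big1 // => p _; rewrite no_hit.
rewrite (bigD1 p0) //= hit0 big1 ?addr0 // => p p_neq.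
apply/eqP; rewrite pnatr_eq0 eqb0; apply: contra p_neq => hit.
have ord_bounds k (i : 'I_k) : 0 <= i%:Z < k by rewrite ltz_nat ltn_ord.
have hit_diff : ((m * n)%N %| (p.1%:Z * n + p.2%:Z * m) - (p0.1%:Z * n + p0.2%:Z * m))%Z.
  by have := rpredB hit0 hit; rewrite opprB addrC addrA subrK.
have [] := @crt_coords_unique m n _ _ _ _ mn_coprime (ord_bounds _ _) (ord_bounds _ _)
  (ord_bounds _ _) (ord_bounds _ _) hit_diff.
by case: p {hit hit_diff} => x y; case: p0 {hit0} => x0 y0 /= [/val_inj->] [/val_inj->].
Qed.

Lemma cmod_fcoef_coprime_le (b : nat) :
  cmod (fcoef (m * n) f b) <= fcoef_max m g * fcoef_max n h.
Proof.
rewrite fcoef_coprime_mul; apply: le_trans (cmod_sum _ _ _ _) _.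
apply: le_trans (_ : \sum_(c < m) \sum_(c' < n)
    fcoef_max m g * fcoef_max n h * (crt_hit b c c')%:R <= _).
  apply: ler_sum => c _; apply: le_trans (cmod_sum _ _ _ _) _; apply: ler_sum => c' _.
  rewrite cmodM [cmod (fcoef _ _ _ * _)]cmodM cmod_nat ler_wpM2r //.
  by rewrite ler_pM ?cmod_ge0 ?le_fcoef_max.
under eq_bigr => c _ do rewrite -mulr_sumr.
rewrite -mulr_sumr -[X in _ <= X]mulr1 ler_wpM2l ?mulr_ge0 ?fcoef_max_ge0 //.
exact: sum_crt_hit_le1.
Qed.

End CoprimeModuli.

Section HarmonicSums.
Context {R : realType}.

Lemma half_le_ln2 : 1 / 2 <= ln (2 : R).
Proof.
have gt_m1 : (-1 : R) < - (1 / 2) by lra.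
have := le_ln1Dx gt_m1; rewrite (_ : 1 + - (1 / 2) = 2^-1); last by field.
by rewrite lnV ?posrE //; lra.
Qed.

Lemma invD1_le_lnD1 (x : R) : 0 < x -> (x + 1)^-1 <= ln (x + 1) - ln x.
Proof.
move=> x_gt0; have x1_gt0 : 0 < x + 1 by lra.
have := @le_ln1Dx R (- (x + 1)^-1).
have -> : 1 - (x + 1)^-1 = x / (x + 1) by field; rewrite gt_eqF.
rewrite ln_div ?posrE // ltrNl opprK invf_lt1 ?ltrDr // => /(_ x_gt0); lra.
Qed.

Lemma harmonic_le_1Dln {n : nat} : (0 < n)%N -> \sum_(i < n) (i.+1%:R : R)^-1 <= 1 + ln n%:R.
Proof.
elim: n => [//|[|n] IH _]; first by rewrite big_ord1 ln1 invr1 addr0.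
rewrite big_ord_recr /= -[n.+2%:R]natr1.
have := invD1_le_lnD1 _ (ltr0Sn R n).
by have := IH isT; lra.
Qed.

Lemma sum_inv_pairs_le (q : nat) : (0 < q)%N ->
  \sum_(b < q | b != 0%N :> nat) ((b%:R : R)^-1 + (q - b)%:R^-1) <= 6 * ln q%:R.
Proof.
case: q => [//|q] _.
rewrite big_mkcond big_ord_recl /= add0r.
under eq_bigr => i _ do rewrite /bump /= add1n subSS.
rewrite big_split /= [X in _ + X <= _](reindex_inj rev_ord_inj) /=.
under [X in _ + X <= _]eq_bigr => i _ do rewrite subKn //.
case: q => [|q]; first by rewrite !big_ord0 ln1; lra.
have := harmonic_le_1Dln (ltn0Sn q); have := half_le_ln2.
have : ln (q.+1%:R : R) <= ln q.+2%:R by rewrite ler_ln ?posrE ?ltr0n // ler_nat.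
have : ln (2 : R) <= ln q.+2%:R by rewrite ler_ln ?posrE ?ltr0n // ler_nat.
lra.
Qed.

End HarmonicSums.

Section GeometricSums.
Context {R : realType}.

Lemma cmod_geometric_efrac_le (q N b : nat) : (0 < b < q)%N ->
  cmod (\sum_(k < N) @efrac R q (- b%:Z) ^+ k) <= q%:R * (b%:R^-1 + (q - b)%:R^-1).
Proof.
move=> /andP[b_gt0 bq].
set G := cmod _; set t := minn b (q - b).
have t_pos : (0 : R) < t%:R by rewrite ltr0n /t; lia.
have tG : t%:R * G <= q%:R.
  have := cmod_geometric_le _ N (@cmod_efrac R q (- b%:Z)).
  have := @cmod_1_sub_efrac_min R q b; rewrite b_gt0 bq => /(_ isT).
  rewrite cmod_1_sub_efracN natrM -/t.
  have := cmod_ge0 (1 - @efrac R q b); have := cmod_ge0 (\sum_(k < N) @efrac R q (- b%:Z) ^+ k).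
  have q_ge0 : (0 : R) <= q%:R by [].
  rewrite -/G; nra.
have inv_t : t%:R^-1 <= (b%:R : R)^-1 + (q - b)%:R^-1.
  by rewrite /t; case: leqP => _; [rewrite lerDl | rewrite lerDr]; rewrite invr_ge0.
apply: le_trans (ler_wpM2l (ler0n _ q) inv_t).
by rewrite ler_pdivlMr // mulrC.
Qed.

Lemma sum_cmod_geometric_efrac_le (q N : nat) : (0 < q)%N ->
  \sum_(b < q) cmod (\sum_(k < N) @efrac R q (- b%:Z) ^+ k) <= N%:R + q%:R * (6 * ln q%:R).
Proof.
move=> q_gt0; rewrite (bigD1 (Ordinal q_gt0)) //=; apply: lerD.
  under eq_bigr => k _ do rewrite oppr0 efrac0 expr1n.
  by rewrite sumr_const card_ord cmod_nat.
apply: le_trans (_ : \sum_(b < q | b != 0%N :> nat) q%:R * (b%:R^-1 + (q - b)%:R^-1) <= _).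
  apply: ler_sum => b; rewrite -val_eqE /= => b_neq0.
  by apply: cmod_geometric_efrac_le; rewrite lt0n b_neq0 ltn_ord.
by rewrite -mulr_sumr ler_wpM2l // sum_inv_pairs_le.
Qed.

End GeometricSums.

Lemma coprime_expn_prod (e : nat -> nat) {p : nat} {s : seq nat} :
  prime p -> all prime s -> p \notin s -> coprime (p ^ e p) (\prod_(r <- s) r ^ e r).
Proof.
move=> p_prime; elim: s => [|r s IH] /=; first by rewrite big_nil coprimen1.
rewrite inE negb_or big_cons coprimeMr => /andP[r_prime s_prime] /andP[p_neq_r p_notin_s].
rewrite IH // andbT; apply/coprimeXl/coprimeXr.
by rewrite prime_coprime // dvdn_prime2.
Qed.

Lemma all_primes_prime {q : nat} {s : seq nat} : all (mem (primes q)) s -> all prime s.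
Proof. by apply: sub_all => p; rewrite /= mem_primes => /andP[]. Qed.

Lemma prod_pfactor_dvdn {q : nat} {s : seq nat} :
  uniq s -> all (mem (primes q)) s -> (\prod_(p <- s) p ^ logn p q %| q)%N.
Proof.
elim: s => [|p s IH] /=; first by rewrite big_nil dvd1n.
move=> /andP[p_notin_s s_uniq] /andP[pq sq]; rewrite big_cons Gauss_dvd.
  by rewrite pfactor_dvdnn IH.
apply: coprime_expn_prod _ (all_primes_prime sq) p_notin_s.
by move: pq; rewrite mem_primes => /andP[].
Qed.

Section MultiplicativeFamily.
Context {R : realType}.
Variables (q : nat) (a : nat -> int -> R[i]).
Hypothesis q_gt0 : (0 < q)%N.
Hypothesis a_periodic : forall d, (d %| q)%N -> periodic (a d) d%:Z.
Hypothesis a_bounded : forall d, (d %| q)%N -> forall n, cmod (a d n) <= 1.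
Hypothesis a_mul : forall d1 d2, (d1 * d2 %| q)%N -> coprime d1 d2 ->
  forall n, a (d1 * d2)%N n = a d1 n * a d2 n.

Lemma cmod_fcoef_prod_pfactor_le (s : seq nat) (b : nat) :
  uniq s -> all (mem (primes q)) s ->
  cmod (fcoef (\prod_(p <- s) p ^ logn p q) (a (\prod_(p <- s) p ^ logn p q)) b) <=
  \prod_(p <- s) fcoef_max (p ^ logn p q) (a (p ^ logn p q)).
Proof.
elim: s b => [|p s IH] b /=.
  move=> _ _; rewrite !big_nil /fcoef big_ord1 invr1 mul1r cmodM cmod_eC mulr1.
  exact/a_bounded/dvd1n.
move=> /andP[p_notin_s s_uniq] /andP[pq sq].
have p_prime : prime p by move: pq; rewrite mem_primes => /andP[].
have coprime_pD := coprime_expn_prod (logn^~ q) p_prime (all_primes_prime sq) p_notin_s.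
have Dq := prod_pfactor_dvdn s_uniq sq.
have pDq : (p ^ logn p q * \prod_(r <- s) r ^ logn r q %| q)%N.
  by rewrite Gauss_dvd // pfactor_dvdnn.
rewrite !big_cons; apply: le_trans (cmod_fcoef_coprime_le _ _ _ _ _ _ _ _ _ _ _ b) _.
- by rewrite expn_gt0 prime_gt0.
- exact: dvdn_gt0 q_gt0 Dq.
- exact: coprime_pD.
- exact/a_periodic/pfactor_dvdnn.
- exact: a_periodic.
- exact: a_mul.
rewrite ler_wpM2l ?fcoef_max_ge0 // fcoef_max_le // ?prodr_ge0 // => [? _|b'].
  exact: fcoef_max_ge0.
exact: IH.
Qed.

Lemma cmod_fcoef_le_prod_primes (b : nat) :
  cmod (fcoef q (a q) b) <= \prod_(p <- primes q) fcoef_max (p ^ logn p q) (a (p ^ logn p q)).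
Proof.
have q_prod : (\prod_(p <- primes q) p ^ logn p q)%N = q.
  by rewrite [in RHS](prod_prime_decomp q_gt0) prime_decompE big_map.
rewrite -[in X in cmod X <= _]q_prod.
by apply: cmod_fcoef_prod_pfactor_le; rewrite ?primes_uniq ?all_predT //; apply/allP.
Qed.

Lemma cmod_sum_interval_le (M : int) (N : nat) :
  cmod (\sum_(k < N) a q (M + k%:Z)) <=
  (\prod_(p <- primes q) fcoef_max (p ^ logn p q) (a (p ^ logn p q))) *
  (N%:R + q%:R * (6 * ln q%:R)).
Proof.
set P := \prod_(p <- _) _.
rewrite (sum_interval_fourier _ _ _ _ q_gt0 (a_periodic q (dvdnn q))).
apply: le_trans (cmod_sum _ _ _ _) _.
apply: le_trans (_ : \sum_(b < q) P * cmod (\sum_(k < N) efrac q (- b%:Z) ^+ k) <= _).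
  apply: ler_sum => b _; rewrite cmodM [cmod (fcoef _ _ _ * _)]cmodM cmod_efrac mulr1.
  by rewrite ler_wpM2r ?cmod_ge0 ?cmod_fcoef_le_prod_primes.
rewrite -mulr_sumr ler_wpM2l ?sum_cmod_geometric_efrac_le //.
by apply: prodr_ge0 => p _; exact: fcoef_max_ge0.
Qed.

End MultiplicativeFamily.

Theorem lemma6p1 :
  exists C : nat, forall (R : realType) (q : nat) (a : nat -> int -> R[i])
    (M : int) (N : nat),
    (0 < q)%N -> (0 < N)%N ->
    (forall d : nat, (d %| q)%N -> forall n : int, a d (n + d%:Z) = a d n) ->
    (forall d : nat, (d %| q)%N -> forall n : int, cmod (a d n) <= 1) ->
    (forall d1 d2 : nat, (d1 * d2 %| q)%N -> coprime d1 d2 ->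
       forall n : int, a (d1 * d2)%N n = a d1 n * a d2 n) ->
    N%:R^-1 * cmod (\sum_(0 <= k < N) a q (M + k%:Z))
      <= C%:R * (1 + q%:R * ln (q%:R : R) / N%:R) *
         \prod_(p <- primes q)
           \big[Num.max/0]_(b < p ^ logn p q)
             cmod ((p ^ logn p q)%:R^-1 *
                   \sum_(r < p ^ logn p q)
                      a (p ^ logn p q)%N r%:Z *
                      eC ((b%:R * r%:R) / (p ^ logn p q)%:R : R)).
Proof.
exists 6%N => R q a M N q_gt0 N_gt0 a_periodic a_bounded a_mul.
have := cmod_sum_interval_le q a q_gt0 a_periodic a_bounded a_mul M N.
rewrite big_mkord /fcoef_max /fcoef.
set P := \prod_(p <- _) _; set S := cmod _ => S_le.
have P_ge0 : 0 <= P by apply: prodr_ge0 => p _; exact: bigmax_ge_id.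
have N_pos : (0 : R) < N%:R by rewrite ltr0n.
have X_ge0 : (0 : R) <= q%:R * ln q%:R / N%:R.
  by rewrite divr_ge0 ?mulr_ge0 ?ln_ge0 ?ler1n.
apply: le_trans (_ : N%:R^-1 * (P * (N%:R + q%:R * (6 * ln q%:R))) <= _).
  by rewrite ler_wpM2l ?invr_ge0.
rewrite (_ : N%:R^-1 * _ = P * (1 + 6 * (q%:R * ln q%:R / N%:R))); last by field; rewrite gt_eqF.
nra.
Qed.
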